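(* For $n>3/2$ and $x\ge 0$ the following holds: \begin{equation*} \frac{x+\sqrt{4n-6+x^2}}{2n-1}<\frac{U(n,-x)}{U (n-1,-x)}<\frac{x+\sqrt{4n-2+x^2}}{2n-1} . \end{equation*} The upper bound is also valid if $n\in (1/2,3/2)$.
   Context: $U(a,x)$ denotes the standard parabolic cylinder function (as in the NIST Digital Library of Mathematical Functions, Chapter 12), i.e. the solution of $y''(x)-(x^2/4+a)y(x)=0$ that is recessive (decays) as $x\rightarrow+\infty$. The parameter $n$ is real. *)

From Stdlib Require Import Reals.
From Coquelicot Require Import Coquelicot.
Open Scope R_scope.

(* [is_PCF_U a u] : u is the standard parabolic cylinder function U(a,.)
   (NIST DLMF ch. 12): u is twice differentiable on R, solves
   u''(x) = (x^2/4 + a) u(x), and is the recessive solution at +oo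
   normalized as in DLMF 12.9.1:  U(a,x) ~ x^(-a-1/2) e^(-x^2/4), x -> +oo,
   i.e.  x^(a+1/2) e^(x^2/4) U(a,x) -> 1.  These conditions determine U(a,.)
   uniquely. *)
Definition is_PCF_U (a : R) (u : R -> R) : Prop :=
  (exists u' : R -> R, forall x : R,
      is_derive u x (u' x) /\ is_derive u' x ((x ^ 2 / 4 + a) * u x)) /\
  is_lim (fun x => Rpower x (a + / 2) * exp (x ^ 2 / 4) * u x) p_infty 1.

From Stdlib Require Import Reals Lra Psatz Classical.
From Coquelicot Require Import Coquelicot.
Open Scope R_scope.

(* Write u = U(n, .), v = U(n-1, .) and p = u'/u.  The Riccati equation p' = y^2/4 + n - p^2,
   compared with the lines p = -k y, shows p(y) ~ -y/2 at +oo; consequently (y/2) u - u', which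
   solves the equation of U(n-1, .), has a Wronskian with v that tends to 0, hence vanishes, and
   the two functions have the same normalisation at +oo.  Uniqueness for the linear ODE gives the
   recurrences u' = (y/2) u - v and v' = (1/2 - n) u - (y/2) v, so rho = u/v > 0 satisfies
   rho' = y rho - 1 + (n - 1/2) rho^2 with y rho(y) -> 1.  The two bounds are the positive roots g
   of (n - 1/2) g^2 + y g = 1 and of (n - 1/2) g^2 + y g = (2n-3)/(2n-1).  The Riccati flow
   crosses the first curve only upwards and the second only downwards; after crossing the first,
   rho increases, and below the second y rho(y) < (2n-3)/(2n-1) < 1, both incompatible with
   y rho(y) -> 1.  The bounds hold at every real y, in particular at y = -x. *)

(* Coquelicot's rules restated on [R], so that they unify with plain real expressions. *)
Lemma is_derive_eq (f : R -> R) (x l l' : R) : is_derive f x l -> l = l' -> is_derive f x l'.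
Proof. now intros H <-. Qed.

Lemma is_derive_Rplus (f g : R -> R) (x df dg : R) : is_derive f x df -> is_derive g x dg ->
  is_derive (fun t => f t + g t) x (df + dg).
Proof. exact (is_derive_plus f g x df dg). Qed.

Lemma is_derive_Rminus (f g : R -> R) (x df dg : R) : is_derive f x df -> is_derive g x dg ->
  is_derive (fun t => f t - g t) x (df - dg).
Proof. exact (is_derive_minus f g x df dg). Qed.

Lemma is_derive_Ropp (f : R -> R) (x df : R) : is_derive f x df -> is_derive (fun t => - f t) x (- df).
Proof. exact (is_derive_opp f x df). Qed.

Lemma is_derive_Rmult (f g : R -> R) (x df dg : R) : is_derive f x df -> is_derive g x dg ->
  is_derive (fun t => f t * g t) x (df * g x + f x * dg).
Proof. intros Hf Hg. exact (is_derive_mult f g x df dg Hf Hg Rmult_comm). Qed.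

Lemma is_derive_comp_ln (f : R -> R) (x df : R) : is_derive f x df -> 0 < f x ->
  is_derive (fun t => ln (f t)) x (df / f x).
Proof.
  intros Hf Hpos.
  assert (Hln : is_derive ln (f x) (/ f x)) by (auto_derive; [lra | field; lra]).
  eapply is_derive_eq; [exact (is_derive_comp ln f x _ _ Hln Hf) |].
  unfold scal; simpl; unfold mult; simpl; field; lra.
Qed.

Lemma is_derive_comp_exp (f : R -> R) (x df : R) : is_derive f x df ->
  is_derive (fun t => exp (f t)) x (df * exp (f x)).
Proof.
  intros Hf.
  assert (Hexp : is_derive exp (f x) (exp (f x))) by (auto_derive; auto; ring).
  eapply is_derive_eq; [exact (is_derive_comp exp f x _ _ Hexp Hf) |].
  unfold scal; simpl; unfold mult; simpl; ring.
Qed.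

Lemma is_derive_continuity_pt (f : R -> R) (x l : R) : is_derive f x l -> continuity_pt f x.
Proof.
  intros H. apply derivable_continuous_pt. exists l. now apply is_derive_Reals.
Qed.

Lemma le_of_is_derive_nonneg (f df : R -> R) (a b : R) :
  (forall x, a <= x <= b -> is_derive f x (df x)) ->
  (forall x, a <= x <= b -> 0 <= df x) -> a <= b -> f a <= f b.
Proof.
  intros Hd Hp Hab.
  destruct (MVT_gen f a b df) as [c [Hc Hf]].
  - intros x Hx. apply Hd. rewrite Rmin_left, Rmax_right in Hx; lra.
  - intros x Hx. rewrite Rmin_left, Rmax_right in Hx by lra.
    apply (is_derive_continuity_pt f x (df x)), Hd; lra.
  - rewrite Rmin_left, Rmax_right in Hc by lra.
    assert (0 <= df c) by (apply Hp; lra). nra.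
Qed.

Lemma eq_of_is_derive_zero (f : R -> R) (a b : R) :
  (forall x, a <= x <= b -> is_derive f x 0) -> a <= b -> f a = f b.
Proof.
  intros Hd Hab. apply Rle_antisym.
  - apply (le_of_is_derive_nonneg f (fun _ => 0)); [exact Hd | intros; lra | exact Hab].
  - enough (- f a <= - f b) by lra.
    apply (le_of_is_derive_nonneg (fun x => - f x) (fun _ => - 0)); [| intros; lra | exact Hab].
    intros x Hx. now apply is_derive_Ropp, Hd.
Qed.

Lemma sign_near_zero_of_pos_derive (D : R -> R) (z l : R) : is_derive D z l -> D z = 0 -> 0 < l ->
  exists e, 0 < e /\ (forall t, z - e < t < z -> D t < 0) /\ (forall t, z < t < z + e -> 0 < D t).
Proof.
  intros Hd Hz Hl. apply is_derive_Reals in Hd.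
  destruct (Hd (l / 2) ltac:(lra)) as [de Hde].
  assert (Hquot : forall t, t <> z -> Rabs (t - z) < de -> 0 < D t / (t - z)).
  { intros t Ht Htz. specialize (Hde (t - z) ltac:(lra) Htz).
    replace (z + (t - z)) with t in Hde by ring. rewrite Hz, Rminus_0_r in Hde.
    apply Rabs_def2 in Hde. lra. }
  exists de. split; [apply cond_pos | split]; intros t Ht.
  - assert (Hq := Hquot t ltac:(lra) ltac:(rewrite Rabs_left; lra)).
    assert (/ (t - z) < 0) by (apply Rinv_lt_0_compat; lra).
    unfold Rdiv in Hq. nra.
  - assert (Hq := Hquot t ltac:(lra) ltac:(rewrite Rabs_right; lra)).
    assert (0 < / (t - z)) by (apply Rinv_0_lt_compat; lra).
    unfold Rdiv in Hq. nra.
Qed.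

Lemma sign_near_of_continuity_pt (D : R -> R) (z : R) : continuity_pt D z -> D z <> 0 ->
  exists e, 0 < e /\ forall t, Rabs (t - z) < e -> 0 < D t * D z.
Proof.
  intros Hc Hz.
  destruct (Hc (Rabs (D z)) (Rabs_pos_lt _ Hz)) as [e [He Hnear]].
  exists e. split; [exact He |]. intros t Ht.
  destruct (Req_dec t z) as [-> | Htz]; [nra |].
  assert (Hd : Rabs (D t - D z) < Rabs (D z)) by (apply Hnear; split; [split; [exact I | auto] | exact Ht]).
  apply Rabs_def2 in Hd.
  destruct (Rcase_abs (D z)); [rewrite Rabs_left in Hd | rewrite Rabs_right in Hd]; nra.
Qed.

Section Crossing.
Variables (D dD : R -> R).

Lemma pos_right_of_upcrossing (z : R) : is_derive D z (dD z) -> 0 <= D z -> (D z = 0 -> 0 < dD z) ->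
  exists e, 0 < e /\ forall t, z < t < z + e -> 0 < D t.
Proof.
  intros Hd [Hpos | Hzero] Hup.
  - destruct (sign_near_of_continuity_pt D z (is_derive_continuity_pt _ _ _ Hd) ltac:(lra))
      as [e [He Hnear]].
    exists e. split; [exact He |]. intros t Ht.
    specialize (Hnear t ltac:(rewrite Rabs_right; lra)). nra.
  - destruct (sign_near_zero_of_pos_derive D z _ Hd (eq_sym Hzero) (Hup (eq_sym Hzero)))
      as [e [He [_ Hright]]].
    now exists e.
Qed.

Lemma neg_left_of_upcrossing (z : R) : is_derive D z (dD z) -> D z <= 0 -> (D z = 0 -> 0 < dD z) ->
  exists e, 0 < e /\ forall t, z - e < t < z -> D t < 0.
Proof.
  intros Hd [Hneg | Hzero] Hup.
  - destruct (sign_near_of_continuity_pt D z (is_derive_continuity_pt _ _ _ Hd) ltac:(lra))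
      as [e [He Hnear]].
    exists e. split; [exact He |]. intros t Ht.
    specialize (Hnear t ltac:(rewrite Rabs_left; lra)). nra.
  - destruct (sign_near_zero_of_pos_derive D z _ Hd Hzero (Hup Hzero)) as [e [He [Hleft _]]].
    now exists e.
Qed.

(* Otherwise the supremum of the interval of positivity would be an up-crossing zero of [D]
   approached from the left through positive values. *)
Lemma pos_of_upcrossings (y0 : R) :
  (forall y, y0 <= y -> is_derive D y (dD y)) -> 0 <= D y0 ->
  (forall z, y0 <= z -> D z = 0 -> 0 < dD z) ->
  forall y, y0 < y -> 0 < D y.
Proof.
  intros Hd H0 Hup y1 Hy1.
  destruct (Rlt_or_le 0 (D y1)) as [Hpos | Hneg]; [exact Hpos | exfalso].
  destruct (pos_right_of_upcrossing y0 (Hd y0 (Rle_refl _)) H0 (Hup y0 (Rle_refl _)))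
    as [e0 [He0 Hinit]].
  set (E := fun t => y0 <= t <= y1 /\ forall s, y0 < s <= t -> 0 < D s).
  set (t0 := y0 + Rmin e0 (y1 - y0) / 2).
  assert (Ht0 : y0 < t0 <= y1 /\ t0 < y0 + e0).
  { pose proof (Rmin_l e0 (y1 - y0)). pose proof (Rmin_r e0 (y1 - y0)).
    assert (0 < Rmin e0 (y1 - y0)) by (apply Rmin_glb_lt; lra). unfold t0; lra. }
  assert (HE0 : E t0) by (split; [lra | intros s Hs; apply Hinit; lra]).
  destruct (completeness E (ex_intro _ y1 (fun t Ht => proj2 (proj1 Ht))) (ex_intro _ t0 HE0))
    as [m [Hub Hlub]].
  assert (Hm : t0 <= m <= y1) by (split; [apply Hub, HE0 | apply Hlub; intros t [Ht _]; lra]).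
  assert (Hbelow : forall s, y0 < s < m -> 0 < D s).
  { intros s Hs. apply NNPP. intro Hns.
    enough (m <= s) by lra. apply Hlub. intros t [_ Ht].
    destruct (Rle_or_lt t s) as [| Hst]; [assumption |].
    exfalso. apply Hns, Ht. lra. }
  assert (Hdm : is_derive D m (dD m)) by (apply Hd; lra).
  assert (Hupm : D m = 0 -> 0 < dD m) by (apply Hup; lra).
  destruct (Rle_or_lt (D m) 0) as [Hm0 | Hm0].
  - destruct (neg_left_of_upcrossing m Hdm Hm0 Hupm) as [e [He Hleft]].
    set (s := Rmax (m - e / 2) ((y0 + m) / 2)).
    assert (m - e / 2 <= s /\ (y0 + m) / 2 <= s < m) as Hs.
    { split; [apply Rmax_l | split; [apply Rmax_r | apply Rmax_lub_lt; lra]]. }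
    specialize (Hbelow s ltac:(lra)). specialize (Hleft s ltac:(lra)). lra.
  - assert (Hmy1 : m < y1) by (destruct (Req_dec m y1); [subst; lra | lra]).
    destruct (pos_right_of_upcrossing m Hdm ltac:(lra) Hupm) as [e [He Hright]].
    set (t := Rmin (m + e / 2) y1).
    assert (m < t <= m + e / 2 /\ t <= y1) as Ht.
    { split; [split; [apply Rmin_glb_lt; lra | apply Rmin_l] | apply Rmin_r]. }
    assert (E t).
    { split; [lra |]. intros s Hs.
      destruct (Rtotal_order s m) as [Hsm | [-> | Hsm]];
        [apply Hbelow | exact Hm0 | apply Hright]; lra. }
    enough (t <= m) by lra. now apply Hub.
Qed.

End Crossing.

Lemma pos_of_downcrossings (D dD : R -> R) (y0 : R) :
  (forall y, y <= y0 -> is_derive D y (dD y)) -> 0 <= D y0 ->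
  (forall z, z <= y0 -> D z = 0 -> dD z < 0) ->
  forall y, y < y0 -> 0 < D y.
Proof.
  intros Hd H0 Hdown y Hy.
  replace y with (- - y) by ring.
  apply (pos_of_upcrossings (fun t => D (- t)) (fun t => - dD (- t)) (- y0)); try lra.
  - intros t Ht.
    assert (Hopp : is_derive (fun t : R => - t) t (-1)) by (auto_derive; auto; ring).
    eapply is_derive_eq; [exact (is_derive_comp D (fun t => - t) t _ _ (Hd (- t) ltac:(lra)) Hopp) |].
    unfold scal; simpl; unfold mult; simpl; ring.
  - now rewrite Ropp_involutive.
  - intros z Hz Hz0. specialize (Hdown (- z) ltac:(lra) Hz0). lra.
Qed.

Lemma abs_ln_lt_1 x : 1 / 2 < x < 3 / 2 -> Rabs (ln x) < 1.
Proof.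
  intros Hx.
  assert (He : 2 < exp 1) by (pose proof (exp_ineq1 1 ltac:(lra)); lra).
  assert (Hinv : / exp 1 < 1 / 2) by (apply (Rmult_lt_reg_r (2 * exp 1)); [lra | field_simplify; lra]).
  apply Rabs_def1.
  - rewrite <- (ln_exp 1). apply ln_increasing; lra.
  - rewrite <- (ln_exp (Ropp 1)), exp_Ropp. apply ln_increasing; [apply Rinv_0_lt_compat, exp_pos | lra].
Qed.

Lemma ln_le_id y : 1 <= y -> 0 <= ln y <= y.
Proof.
  intros Hy. split.
  - rewrite <- ln_1. destruct (Req_dec y 1) as [-> | Hne]; [lra |].
    left; apply ln_increasing; lra.
  - destruct (Req_dec (ln y) 0) as [Hz | Hnz]; [lra |].
    pose proof (exp_ineq1 _ Hnz) as H. rewrite exp_ln in H by lra. lra.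
Qed.

Lemma eventually_ge (Y : R) : Rbar_locally p_infty (fun y => Y <= y).
Proof. exists Y. intros; lra. Qed.

Lemma eventually_exists (P : R -> Prop) (Y : R) :
  Rbar_locally p_infty P -> exists y, Y <= y /\ P y.
Proof.
  intros [M HM]. exists (Rmax M Y + 1).
  split; [pose proof (Rmax_r M Y); lra | apply HM; pose proof (Rmax_l M Y); lra].
Qed.

Lemma quadratic_dominates_log eta A B : 0 < eta ->
  Rbar_locally p_infty (fun y => A + B * ln y < eta * y ^ 2 / 2).
Proof.
  intros Heta.
  set (K := 2 * (Rabs A + Rabs B + 1) / eta).
  pose proof (Rabs_pos A). pose proof (Rabs_pos B).
  assert (HK : K * eta = 2 * (Rabs A + Rabs B + 1)) by (unfold K; field; lra).
  exists (Rmax 1 K). intros y Hy.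
  pose proof (Rmax_l 1 K). pose proof (Rmax_r 1 K).
  destruct (ln_le_id y ltac:(lra)) as [Hln0 Hln].
  assert (HA : A <= Rabs A) by apply RRle_abs.
  assert (HB : B * ln y <= Rabs B * y).
  { apply Rle_trans with (Rabs B * ln y).
    - apply Rmult_le_compat_r; [lra | apply RRle_abs].
    - apply Rmult_le_compat_l; [apply Rabs_pos | lra]. }
  assert (eta * y * K <= eta * y * y) by (apply Rmult_le_compat_l; nra).
  nra.
Qed.

(* [is_PCF_U a u] says that [pcf_scale a y * u y -> 1] as [y -> +oo]. *)
Definition pcf_scale (a y : R) : R := Rpower y (a + / 2) * exp (y ^ 2 / 4).

Lemma pcf_scale_pos a y : 0 < pcf_scale a y.
Proof. apply Rmult_lt_0_compat; apply exp_pos. Qed.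

Lemma ln_pcf_scale a y : 0 < y -> ln (pcf_scale a y) = (a + / 2) * ln y + y ^ 2 / 4.
Proof.
  intros Hy. unfold pcf_scale, Rpower. rewrite ln_mult by apply exp_pos. now rewrite !ln_exp.
Qed.

Lemma pcf_scale_pred a y : 0 < y -> pcf_scale a y = y * pcf_scale (a - 1) y.
Proof.
  intros Hy. unfold pcf_scale, Rpower.
  replace ((a + / 2) * ln y) with ((a - 1 + / 2) * ln y + ln y) by ring.
  rewrite exp_plus, exp_ln by lra. ring.
Qed.

Section Recessive.
Variables (a : R) (u du : R -> R).
Hypothesis u_deriv : forall y, is_derive u y (du y).
Hypothesis du_deriv : forall y, is_derive du y ((y ^ 2 / 4 + a) * u y).
Hypothesis u_lim : is_lim (fun y => pcf_scale a y * u y) p_infty 1.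

Lemma recessive_near_one :
  Rbar_locally p_infty (fun y => 0 < u y /\ 1 / 2 < pcf_scale a y * u y < 3 / 2).
Proof.
  apply is_lim_spec in u_lim.
  apply (filter_imp (fun y => Rabs (pcf_scale a y * u y - 1) < 1 / 2)); [| exact (u_lim (mkposreal (1/2) ltac:(lra)))].
  intros y Hy. apply Rabs_def2 in Hy. pose proof (pcf_scale_pos a y).
  split; [| lra]. destruct (Rlt_or_le 0 (u y)); [assumption | nra].
Qed.

Lemma ln_recessive_bound :
  Rbar_locally p_infty (fun y => 0 < u y /\ Rabs (ln (u y) + (a + / 2) * ln y + y ^ 2 / 4) < 1).
Proof.
  eapply filter_imp; [| exact (filter_and _ _ recessive_near_one (eventually_ge 1))].
  intros y [[Hu Hnear] Hy]. split; [exact Hu |].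
  pose proof (pcf_scale_pos a y).
  replace (ln (u y) + (a + / 2) * ln y + y ^ 2 / 4) with (ln (pcf_scale a y * u y))
    by (rewrite ln_mult, ln_pcf_scale by lra; ring).
  now apply abs_ln_lt_1.
Qed.

(* Both follow from [ln u y = - y^2/4 + O(ln y)]. *)
Lemma log_growth_bounded_above k y0 C :
  (forall y, y0 <= y -> ln (u y) + k * y ^ 2 / 2 <= C) -> k <= 1 / 2.
Proof.
  intros Hbound. apply Rnot_lt_le. intros Hk.
  destruct (eventually_exists _ y0 (filter_and _ _ ln_recessive_bound
     (quadratic_dominates_log (k - 1 / 2) (C + 1) (a + / 2) ltac:(lra)))) as [y [Hy [[_ Hln] Hq]]].
  specialize (Hbound y Hy). apply Rabs_def2 in Hln. lra.
Qed.

Lemma log_growth_bounded_below k y0 C :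
  (forall y, y0 <= y -> C <= ln (u y) + k * y ^ 2 / 2) -> 1 / 2 <= k.
Proof.
  intros Hbound. apply Rnot_lt_le. intros Hk.
  destruct (eventually_exists _ y0 (filter_and _ _ ln_recessive_bound
     (quadratic_dominates_log (1 / 2 - k) (1 - C) (- (a + / 2)) ltac:(lra)))) as [y [Hy [[_ Hln] Hq]]].
  specialize (Hbound y Hy). apply Rabs_def2 in Hln. lra.
Qed.

Lemma is_derive_log_deriv_shift k y : u y <> 0 ->
  is_derive (fun t => du t / u t + k * t) y (y ^ 2 / 4 + a - (du y / u y) ^ 2 + k).
Proof.
  intros Hu.
  assert (Hlin : is_derive (fun t : R => k * t) y k) by (auto_derive; auto; ring).
  eapply is_derive_eq; [exact (is_derive_Rplus _ _ y _ _ (is_derive_div du u y _ _ (du_deriv y) (u_deriv y) Hu) Hlin) |].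
  field. exact Hu.
Qed.

Lemma is_derive_ln_shift k y : 0 < u y ->
  is_derive (fun t => ln (u t) + k * t ^ 2 / 2) y (du y / u y + k * y).
Proof.
  intros Hu.
  assert (Hq : is_derive (fun t : R => k * t ^ 2 / 2) y (k * y)) by (auto_derive; auto; lra).
  exact (is_derive_Rplus _ _ y _ _ (is_derive_comp_ln u y _ (u_deriv y) Hu) Hq).
Qed.

(* The logarithmic derivative [p = u'/u] solves [p' = y^2/4 + a - p^2]; a line [p = - k y]
   with [k^2 > 1/4] is eventually crossed only downwards, and one with [k^2 < 1/4] only upwards.
   Crossing it the wrong way would make [ln u + k y^2/2] monotone, against [log_growth_*]. *)
Lemma log_deriv_lower eta : 0 < eta ->
  Rbar_locally p_infty (fun y => - (1 / 2 + eta) * y <= du y / u y).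
Proof.
  intros Heta. set (k := 1 / 2 + eta).
  assert (Hq := quadratic_dominates_log (2 * (eta + eta ^ 2)) (a + k) 0 ltac:(nra)).
  destruct (filter_and _ _ recessive_near_one Hq) as [Y HY].
  exists Y. intros y0 Hy0. apply Rnot_lt_le. intros Hbelow.
  assert (Hstay : forall t, y0 < t -> du t / u t + k * t < 0).
  { enough (forall t, y0 < t -> 0 < - (du t / u t + k * t)) as H by (intros t Ht; specialize (H t Ht); lra).
    apply (pos_of_upcrossings _ (fun t => - (t ^ 2 / 4 + a - (du t / u t) ^ 2 + k)) y0).
    - intros t Ht. destruct (HY t ltac:(lra)) as [[Hu _] _].
      apply is_derive_Ropp, is_derive_log_deriv_shift. lra.
    - cbv beta. lra.
    - intros z Hz Hz0. cbv beta in Hz0 |- *. destruct (HY z ltac:(lra)) as [_ Hqz].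
      replace (du z / u z) with (- k * z) by lra.
      replace (- (z ^ 2 / 4 + a - (- k * z) ^ 2 + k)) with ((eta + eta ^ 2) * z ^ 2 - (a + k) : R)
        by (unfold k; field).
      lra. }
  assert (Hdecr : forall y, y0 <= y -> ln (u y) + k * y ^ 2 / 2 <= ln (u y0) + k * y0 ^ 2 / 2).
  { intros y Hy. enough (- (ln (u y0) + k * y0 ^ 2 / 2) <= - (ln (u y) + k * y ^ 2 / 2)) by lra.
    apply (le_of_is_derive_nonneg (fun t => - (ln (u t) + k * t ^ 2 / 2))
             (fun t => - (du t / u t + k * t))); [| | exact Hy].
    - intros t Ht. destruct (HY t ltac:(lra)) as [[Hu _] _].
      now apply is_derive_Ropp, is_derive_ln_shift.
    - intros t Ht. destruct (Req_dec t y0) as [-> | Hne]; [lra |].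
      specialize (Hstay t ltac:(lra)). lra. }
  apply log_growth_bounded_above in Hdecr. unfold k in Hdecr. lra.
Qed.

Lemma log_deriv_upper eta : 0 < eta < 1 ->
  Rbar_locally p_infty (fun y => du y / u y <= - (1 / 2 - eta) * y).
Proof.
  intros Heta. set (k := 1 / 2 - eta).
  assert (Hq := quadratic_dominates_log (2 * (eta - eta ^ 2)) (- (a + k)) 0 ltac:(nra)).
  destruct (filter_and _ _ recessive_near_one Hq) as [Y HY].
  exists Y. intros y0 Hy0. apply Rnot_lt_le. intros Habove.
  assert (Hstay : forall t, y0 < t -> 0 < du t / u t + k * t).
  { apply (pos_of_upcrossings _ (fun t => t ^ 2 / 4 + a - (du t / u t) ^ 2 + k) y0).
    - intros t Ht. destruct (HY t ltac:(lra)) as [[Hu _] _].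
      apply is_derive_log_deriv_shift. lra.
    - cbv beta. lra.
    - intros z Hz Hz0. cbv beta in Hz0 |- *. destruct (HY z ltac:(lra)) as [_ Hqz].
      replace (du z / u z) with (- k * z) by lra.
      replace (z ^ 2 / 4 + a - (- k * z) ^ 2 + k) with ((eta - eta ^ 2) * z ^ 2 - - (a + k) : R)
        by (unfold k; field).
      lra. }
  assert (Hincr : forall y, y0 <= y -> ln (u y0) + k * y0 ^ 2 / 2 <= ln (u y) + k * y ^ 2 / 2).
  { intros y Hy.
    apply (le_of_is_derive_nonneg (fun t => ln (u t) + k * t ^ 2 / 2)
             (fun t => du t / u t + k * t)); [| | exact Hy].
    - intros t Ht. destruct (HY t ltac:(lra)) as [[Hu _] _].
      now apply is_derive_ln_shift.
    - intros t Ht. destruct (Req_dec t y0) as [-> | Hne]; [lra |].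
      specialize (Hstay t ltac:(lra)). lra. }
  apply log_growth_bounded_below in Hincr. unfold k in Hincr. lra.
Qed.

Lemma log_deriv_asymp eta : 0 < eta < 1 ->
  Rbar_locally p_infty (fun y =>
    0 < u y /\ - (1 / 2 + eta) * y <= du y / u y <= - (1 / 2 - eta) * y).
Proof.
  intros Heta.
  assert (Hlow := log_deriv_lower eta (proj1 Heta)).
  eapply filter_imp; [| exact (filter_and _ _ recessive_near_one
     (filter_and _ _ Hlow (log_deriv_upper eta Heta)))].
  intros y [[Hu _] Hb]. now split.
Qed.

Lemma log_deriv_div_id_lim : is_lim (fun y => du y / u y / y) p_infty (- 1 / 2).
Proof.
  apply is_lim_spec. intros [eps Heps]. simpl.
  set (eta := Rmin (eps / 2) (1 / 2)).
  assert (eta <= eps / 2 /\ eta <= 1 / 2 /\ 0 < eta) as [He1 [He2 He0]].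
  { split; [apply Rmin_l | split; [apply Rmin_r | apply Rmin_glb_lt; lra]]. }
  assert (Hasymp := log_deriv_asymp eta ltac:(lra)).
  destruct (filter_and _ _ Hasymp (eventually_ge 1)) as [M HM].
  exists M. intros y HyM. destruct (HM y HyM) as [[Hu Hb] Hy].
  replace (du y / u y / y - - 1 / 2) with ((du y / u y + y / 2) / y) by (field; lra).
  unfold Rdiv at 1. rewrite Rabs_mult, Rabs_inv, (Rabs_right y) by lra.
  apply (Rmult_lt_reg_r y); [lra |]. rewrite Rmult_assoc, Rinv_l, Rmult_1_r by lra.
  apply Rabs_def1; nra.
Qed.

(* For [a > 0] the convexity of [u^2/2] ([(u u')' = u'^2 + (y^2/4 + a) u^2 >= 0]) together with
   [u u' < 0] near [+oo] forces [u u' < 0] everywhere. *)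
Lemma recessive_pos_decr : 0 < a -> forall y, 0 < u y /\ du y < 0.
Proof.
  intros Ha.
  assert (Hup := log_deriv_upper (1 / 4) ltac:(lra)).
  destruct (filter_and _ _ recessive_near_one (filter_and _ _ Hup (eventually_ge 1))) as [M HM].
  assert (Hfar : forall t, M < t -> 0 < u t /\ u t * du t < 0).
  { intros t Ht. destruct (HM t Ht) as [[Hu _] [Hp H1]].
    split; [exact Hu |].
    replace (u t * du t) with (du t / u t * (u t * u t)) by (field; lra).
    assert (0 < u t * u t) by nra. nra. }
  assert (Hprod : forall y, u y * du y < 0).
  { intros y. set (t := Rmax y M + 1).
    assert (y <= t /\ M < t) as [Hyt HMt].
    { pose proof (Rmax_l y M). pose proof (Rmax_r y M). unfold t; lra. }
    apply Rle_lt_trans with (u t * du t); [| apply Hfar, HMt].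
    apply (le_of_is_derive_nonneg (fun t => u t * du t)
             (fun t => du t * du t + u t * ((t ^ 2 / 4 + a) * u t))); [| | exact Hyt].
    - intros x _. exact (is_derive_Rmult u du x _ _ (u_deriv x) (du_deriv x)).
    - intros x _. pose proof (pow2_ge_0 x). nra. }
  assert (Hpos : forall y, 0 < u y).
  { intros y. destruct (Rlt_or_le 0 (u y)) as [| Hle]; [assumption | exfalso].
    assert (Hneg : u y < 0).
    { destruct Hle as [| Hz]; [assumption |]. specialize (Hprod y). rewrite Hz in Hprod. lra. }
    destruct (Rlt_or_le M y) as [HMy | HyM]; [destruct (Hfar y HMy); lra |].
    destruct (IVT u y (M + 1) (fun x => is_derive_continuity_pt _ _ _ (u_deriv x)) ltac:(lra)
                Hneg (proj1 (Hfar (M + 1) ltac:(lra)))) as [z [_ Hz]].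
    specialize (Hprod z). rewrite Hz in Hprod. lra. }
  intros y. specialize (Hprod y). specialize (Hpos y). split; [exact Hpos | nra].
Qed.

End Recessive.

(* Energy estimate: [(z^2 + z'^2) e^{(1+K) y}] is nondecreasing wherever [|Q| <= K]. *)
Lemma linear_ode_zero_backward (z dz Q : R -> R) (T t K : R) :
  (forall y, is_derive z y (dz y)) -> (forall y, is_derive dz y (Q y * z y)) ->
  z T = 0 -> dz T = 0 -> t <= T -> (forall y, t <= y <= T -> Rabs (Q y) <= K) ->
  z t = 0.
Proof.
  intros Hz Hdz HzT HdzT Ht HQ.
  set (E := fun y => (z y ^ 2 + dz y ^ 2) * exp ((1 + K) * y)).
  assert (HE : E t <= E T).
  { apply (le_of_is_derive_nonneg E (fun y =>
      (2 * z y * dz y + 2 * dz y * (Q y * z y)) * exp ((1 + K) * y)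
      + (z y ^ 2 + dz y ^ 2) * ((1 + K) * exp ((1 + K) * y)))); [| | exact Ht].
    - intros y _. apply (is_derive_Rmult (fun y => z y ^ 2 + dz y ^ 2) (fun y => exp ((1 + K) * y))).
      + eapply is_derive_eq; [apply is_derive_Rplus; [exact (is_derive_pow z 2 y _ (Hz y)) |
                                                     exact (is_derive_pow dz 2 y _ (Hdz y))] |].
        simpl; ring.
      + apply is_derive_comp_exp. auto_derive; auto; ring.
    - intros y Hy. specialize (HQ y Hy).
      pose proof (RRle_abs (Q y)). pose proof (Rabs_maj2 (Q y)).
      assert (0 <= (z y + dz y) ^ 2 * ((1 + K) + (1 + Q y))) by (apply Rmult_le_pos; [apply pow2_ge_0 | lra]).
      assert (0 <= (z y - dz y) ^ 2 * ((1 + K) - (1 + Q y))) by (apply Rmult_le_pos; [apply pow2_ge_0 | lra]).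
      pose proof (exp_pos ((1 + K) * y)). nra. }
  unfold E in HE. rewrite HzT, HdzT in HE.
  pose proof (exp_pos ((1 + K) * t)).
  assert (z t ^ 2 + dz t ^ 2 <= 0) by nra. nra.
Qed.

Lemma wronskian_factor_bound a y p r : 1 <= y ->
  - (3 / 4) * y <= p <= - (1 / 4) * y -> - (3 / 4) * y <= r <= - (1 / 4) * y ->
  Rabs ((y / 2 - p) * r - / 2 + (y ^ 2 / 4 + a) - y / 2 * p) <= (2 + Rabs a) * (y * y).
Proof.
  intros Hy Hp Hr. pose proof (RRle_abs a). pose proof (Rabs_maj2 a).
  assert (1 <= y * y) by nra.
  apply Rabs_le. split.
  - assert ((y / 2 - p) * r >= (5 / 4 * y) * r) by nra.
    assert ((5 / 4 * y) * r >= (5 / 4 * y) * (- (3 / 4) * y)) by nra.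
    assert (y / 2 * p <= y / 2 * (- (1 / 4) * y)) by nra.
    nra.
  - assert ((y / 2 - p) * r <= 0) by nra.
    assert (y / 2 * p >= y / 2 * (- (3 / 4) * y)) by nra.
    nra.
Qed.

Section Recurrence.
Variables (a : R) (u du v dv : R -> R).
Hypothesis u_deriv : forall y, is_derive u y (du y).
Hypothesis du_deriv : forall y, is_derive du y ((y ^ 2 / 4 + a) * u y).
Hypothesis u_lim : is_lim (fun y => pcf_scale a y * u y) p_infty 1.
Hypothesis v_deriv : forall y, is_derive v y (dv y).
Hypothesis dv_deriv : forall y, is_derive dv y ((y ^ 2 / 4 + (a - 1)) * v y).
Hypothesis v_lim : is_lim (fun y => pcf_scale (a - 1) y * v y) p_infty 1.

Let w y := y / 2 * u y - du y.
Let dw y := (/ 2 - (y ^ 2 / 4 + a)) * u y + y / 2 * du y.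
Let W y := w y * dv y - dw y * v y.

Lemma is_derive_w y : is_derive w y (dw y).
Proof.
  assert (Hhalf : is_derive (fun y : R => y / 2) y (/ 2)) by (auto_derive; auto; lra).
  eapply is_derive_eq.
  - exact (is_derive_Rminus _ du y _ _ (is_derive_Rmult (fun y => y / 2) u y _ _ Hhalf (u_deriv y)) (du_deriv y)).
  - unfold dw. field.
Qed.

Lemma is_derive_dw y : is_derive dw y ((y ^ 2 / 4 + (a - 1)) * w y).
Proof.
  assert (Hhalf : is_derive (fun y : R => y / 2) y (/ 2)) by (auto_derive; auto; lra).
  assert (Hcoef : is_derive (fun y : R => / 2 - (y ^ 2 / 4 + a)) y (- (y / 2))) by (auto_derive; auto; field).
  eapply is_derive_eq.
  - exact (is_derive_Rplus _ _ y _ _ (is_derive_Rmult _ u y _ _ Hcoef (u_deriv y))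
                                     (is_derive_Rmult (fun y => y / 2) du y _ _ Hhalf (du_deriv y))).
  - unfold w. field.
Qed.

Lemma wronskian_const y : W y = W 0.
Proof.
  assert (HW : forall x, is_derive W x 0).
  { intros x. eapply is_derive_eq.
    - exact (is_derive_Rminus _ _ x _ _ (is_derive_Rmult w dv x _ _ (is_derive_w x) (dv_deriv x))
                                        (is_derive_Rmult dw v x _ _ (is_derive_dw x) (v_deriv x))).
    - ring. }
  destruct (Rle_or_lt 0 y).
  - symmetry. apply (eq_of_is_derive_zero W); auto.
  - apply (eq_of_is_derive_zero W); [auto | lra].
Qed.

(* Near [+oo], [|W| <= C y^2 u v] decays like [e^{-y^2/2}] up to powers of [y]. *)
Lemma wronskian_zero y : W y = 0.
Proof.
  rewrite wronskian_const. clear y. apply NNPP. intros HW0.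
  set (K := 2 + Rabs a).
  assert (HK : 0 < K) by (pose proof (Rabs_pos a); unfold K; lra).
  assert (HWpos : 0 < Rabs (W 0)) by (apply Rabs_pos_lt; assumption).
  assert (Hu := log_deriv_asymp a u du u_deriv du_deriv u_lim (1 / 4) ltac:(lra)).
  assert (Hv := log_deriv_asymp (a - 1) v dv v_deriv dv_deriv v_lim (1 / 4) ltac:(lra)).
  assert (Hlnu := ln_recessive_bound a u u_lim).
  assert (Hlnv := ln_recessive_bound (a - 1) v v_lim).
  assert (Hq := quadratic_dominates_log 1 (ln K + 2 - ln (Rabs (W 0))) (2 - 2 * a) ltac:(lra)).
  destruct (eventually_exists _ 1 (filter_and _ _ (filter_and _ _ Hu Hv)
              (filter_and _ _ (filter_and _ _ Hlnu Hlnv) Hq)))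
    as [y [Hy [[[Hu0 Hp] [Hv0 Hr]] [[[_ Hlu] [_ Hlv]] Hqy]]]].
  set (p := du y / u y) in *. set (r := dv y / v y) in *.
  assert (HWy : W 0 = u y * v y * ((y / 2 - p) * r - / 2 + (y ^ 2 / 4 + a) - y / 2 * p)).
  { rewrite <- (wronskian_const y). unfold W, w, dw, p, r. field. split; lra. }
  assert (Hbound := wronskian_factor_bound a y p r Hy ltac:(lra) ltac:(lra)).
  fold K in Hbound.
  assert (Hle : Rabs (W 0) <= K * (y * y) * (u y * v y)).
  { rewrite HWy, Rabs_mult, (Rabs_right (u y * v y)) by nra.
    rewrite (Rmult_comm (K * (y * y))). apply Rmult_le_compat_l; [nra | exact Hbound]. }
  assert (Hln : ln (Rabs (W 0)) <= ln K + 2 * ln y + ln (u y) + ln (v y)).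
  { assert (0 < y * y /\ 0 < K * (y * y) /\ 0 < u y * v y) as [Hyy [HKyy Huv]].
    { repeat split; repeat apply Rmult_lt_0_compat; lra. }
    replace (ln K + 2 * ln y + ln (u y) + ln (v y)) with (ln (K * (y * y) * (u y * v y)))
      by ((rewrite !ln_mult by lra); ring).
    destruct Hle as [Hlt | Heq]; [left; apply ln_increasing; assumption | right; now rewrite Heq]. }
  apply Rabs_def2 in Hlu. apply Rabs_def2 in Hlv. lra.
Qed.

Lemma lim_pcf_scale_w : is_lim (fun y => pcf_scale (a - 1) y * w y) p_infty 1.
Proof.
  apply (is_lim_ext_loc (fun y => pcf_scale a y * u y * (/ 2 - du y / u y / y))).
  - destruct (filter_and _ _ (recessive_near_one a u u_lim) (eventually_ge 1)) as [M HM].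
    exists M. intros y Hy. destruct (HM y Hy) as [[Hu _] Hy1].
    rewrite (pcf_scale_pred a y) by lra. unfold w. field. split; lra.
  - replace (Finite 1) with (Rbar_mult 1 (/ 2 - - 1 / 2)) by (simpl; f_equal; field).
    apply is_lim_mult; [exact u_lim | | exact I].
    apply (is_lim_minus' (fun _ => / 2)); [apply is_lim_const |].
    exact (log_deriv_div_id_lim a u du u_deriv du_deriv u_lim).
Qed.

(* A vanishing Wronskian makes [w / v] constant where [v > 0], and the normalisations of [w] and
   [v] at [+oo] agree. *)
Lemma w_eq_v_eventually : exists Y, forall y, Y <= y -> w y = v y.
Proof.
  destruct (recessive_near_one (a - 1) v v_lim) as [Y HY].
  set (c := w (Y + 1) / v (Y + 1)).
  assert (Hc : forall y, Y + 1 <= y -> w y = c * v y).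
  { intros y Hy. destruct (HY y ltac:(lra)) as [Hvy _].
    enough (w y / v y = c) as <- by (field; lra).
    symmetry. apply (eq_of_is_derive_zero (fun y => w y / v y)); [| exact Hy].
    intros t Ht. destruct (HY t ltac:(lra)) as [Hvt _].
    eapply is_derive_eq; [exact (is_derive_div w v t _ _ (is_derive_w t) (v_deriv t) ltac:(lra)) |].
    pose proof (wronskian_zero t) as HWt. unfold W in HWt.
    field_simplify; [| lra]. replace (dw t * v t - w t * dv t) with (- (w t * dv t - dw t * v t)) by ring.
    rewrite HWt. field. lra. }
  assert (Hc1 : c = 1).
  { assert (Hlim : is_lim (fun y => pcf_scale (a - 1) y * w y) p_infty (c * 1)).
    { apply (is_lim_ext_loc (fun y => c * (pcf_scale (a - 1) y * v y))).
      - exists (Y + 1). intros y Hy. rewrite (Hc y) by lra. ring.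
      - exact (is_lim_scal_l _ c p_infty 1 v_lim). }
    apply is_lim_unique in Hlim. rewrite (is_lim_unique _ _ _ lim_pcf_scale_w) in Hlim.
    injection Hlim. lra. }
  exists (Y + 1). intros y Hy. rewrite (Hc y Hy), Hc1. ring.
Qed.

Lemma v_eq_w y : v y = w y.
Proof.
  destruct w_eq_v_eventually as [Y HY].
  set (T := Rmax Y y + 1).
  assert (Y + 1 <= T /\ y <= T) as [HYT HyT].
  { pose proof (Rmax_l Y y). pose proof (Rmax_r Y y). unfold T; lra. }
  set (z := fun t => w t - v t).
  assert (Hz : forall t, is_derive z t (dw t - dv t)).
  { intros t. exact (is_derive_Rminus w v t _ _ (is_derive_w t) (v_deriv t)). }
  assert (Hdz : forall t, is_derive (fun t => dw t - dv t) t ((t ^ 2 / 4 + (a - 1)) * z t)).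
  { intros t. eapply is_derive_eq; [exact (is_derive_Rminus dw dv t _ _ (is_derive_dw t) (dv_deriv t)) |].
    unfold z. ring. }
  assert (HzT : z T = 0) by (unfold z; rewrite HY; [ring | lra]).
  assert (HdzT : dw T - dv T = 0).
  { assert (Hloc : is_derive z T 0).
    { apply (is_derive_ext_loc (fun _ => 0)); [| apply (is_derive_const (K := R_AbsRing) (V := R_NormedModule) 0 T)].
      exists (mkposreal 1 Rlt_0_1). intros t Ht. change (Rabs (t - T) < 1) in Ht.
      apply Rabs_def2 in Ht. unfold z. rewrite HY by lra. exact (eq_sym (Rminus_diag_eq _ _ eq_refl)). }
    rewrite <- (is_derive_unique _ _ _ Hloc). exact (eq_sym (is_derive_unique _ _ _ (Hz T))). }
  enough (z y = 0) by (unfold z in *; lra).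
  apply (linear_ode_zero_backward z (fun t => dw t - dv t) (fun t => t ^ 2 / 4 + (a - 1)) T y
           ((y ^ 2 + T ^ 2) / 4 + Rabs (a - 1))); auto.
  intros t Ht. eapply Rle_trans; [apply Rabs_triang |].
  rewrite Rabs_right by (pose proof (pow2_ge_0 t); lra).
  assert (t ^ 2 <= y ^ 2 + T ^ 2) by (destruct (Rle_or_lt 0 t); nra).
  lra.
Qed.

Lemma recurrence_u y : du y = y / 2 * u y - v y.
Proof. rewrite v_eq_w. unfold w. ring. Qed.

Lemma recurrence_v y : dv y = (1 / 2 - a) * u y - y / 2 * v y.
Proof.
  assert (Hv : is_derive v y (dw y)).
  { apply (is_derive_ext w); [intros t; symmetry; apply v_eq_w | apply is_derive_w]. }
  rewrite <- (is_derive_unique _ _ _ (v_deriv y)), (is_derive_unique _ _ _ Hv).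
  unfold dw. rewrite recurrence_u. field.
Qed.

End Recurrence.

(* The positive root [g] of [m/2 g^2 + y g = c/(2m)]. *)
Definition riccati_root (m c y : R) : R := (- y + sqrt (c + y ^ 2)) / m.

Lemma abs_lt_sqrt_add_sq c y : 0 < c -> Rabs y < sqrt (c + y ^ 2).
Proof.
  intros Hc. rewrite <- sqrt_Rsqr_abs. apply sqrt_lt_1_alt.
  unfold Rsqr. pose proof (pow2_ge_0 y). split; [nra | lra].
Qed.

Section RiccatiRoot.
Variables (m c : R).
Hypothesis m_pos : 0 < m.
Hypothesis c_pos : 0 < c.

Lemma riccati_root_pos y : 0 < riccati_root m c y.
Proof.
  pose proof (abs_lt_sqrt_add_sq c y c_pos). pose proof (RRle_abs y).
  apply Rdiv_lt_0_compat; lra.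
Qed.

Lemma riccati_root_eq y : m / 2 * riccati_root m c y ^ 2 + y * riccati_root m c y = c / (2 * m).
Proof.
  unfold riccati_root.
  pose proof (sqrt_sqrt (c + y ^ 2) ltac:(pose proof (pow2_ge_0 y); lra)) as Hs.
  replace (m / 2 * ((- y + sqrt (c + y ^ 2)) / m) ^ 2 + y * ((- y + sqrt (c + y ^ 2)) / m))
    with ((sqrt (c + y ^ 2) * sqrt (c + y ^ 2) - y ^ 2) / (2 * m)) by (field; lra).
  rewrite Hs. field. lra.
Qed.

Lemma is_derive_riccati_root y :
  is_derive (riccati_root m c) y ((-1 + y / sqrt (c + y ^ 2)) / m).
Proof.
  pose proof (pow2_ge_0 y). pose proof (abs_lt_sqrt_add_sq c y c_pos). pose proof (Rabs_pos y).
  unfold riccati_root. auto_derive.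
  - lra.
  - replace (y * (y * 1)) with (y ^ 2) by ring. field. split; lra.
Qed.

End RiccatiRoot.

Section RiccatiRatio.
Variables (n : R) (rho : R -> R).
Hypothesis n_gt : 1 / 2 < n.
Hypothesis rho_deriv : forall y, is_derive rho y (y * rho y - 1 + (n - 1 / 2) * rho y ^ 2).
Hypothesis rho_lim : is_lim (fun y => y * rho y) p_infty 1.

Lemma mul_ratio_near_one eps : 0 < eps ->
  Rbar_locally p_infty (fun y => 1 - eps < y * rho y < 1 + eps).
Proof.
  intros Heps. apply is_lim_spec in rho_lim.
  destruct (rho_lim (mkposreal eps Heps)) as [M HM].
  exists M. intros y Hy. specialize (HM y Hy). simpl in HM. apply Rabs_def2 in HM. lra.
Qed.

(* Once [rho >= g] the Riccati equation makes [rho] increasing, so [y rho y] cannot tend to 1. *)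
Lemma riccati_ratio_lt_upper_root (rho_pos : forall y, 0 < rho y) y :
  rho y < riccati_root (2 * n - 1) (4 * n - 2) y.
Proof.
  set (g := riccati_root (2 * n - 1) (4 * n - 2)).
  set (s := fun t => sqrt (4 * n - 2 + t ^ 2)).
  assert (Hs : forall t, Rabs t < s t) by (intros t; apply abs_lt_sqrt_add_sq; lra).
  assert (Hg : forall t, t * g t - 1 + (n - 1 / 2) * g t ^ 2 = 0).
  { intros t. pose proof (riccati_root_eq (2 * n - 1) (4 * n - 2) ltac:(lra) ltac:(lra) t) as Heq.
    fold g in Heq. replace ((4 * n - 2) / (2 * (2 * n - 1))) with 1 in Heq by (field; lra). lra. }
  assert (Hgs : forall t, (n - 1 / 2) * (2 * g t) + t = s t) by (intros t; unfold g, riccati_root, s; field; lra).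
  apply Rnot_le_lt. intros Hge.
  assert (Habove : forall t, y < t -> 0 < rho t - g t).
  { apply (pos_of_upcrossings _ (fun t => (t * rho t - 1 + (n - 1 / 2) * rho t ^ 2)
                                         - (-1 + t / s t) / (2 * n - 1)) y).
    - intros t _. apply is_derive_Rminus; [apply rho_deriv | apply is_derive_riccati_root; lra].
    - lra.
    - intros z _ Hz. cbv beta in Hz |- *. replace (rho z) with (g z) by lra. rewrite Hg.
      pose proof (Hs z). pose proof (RRle_abs z). pose proof (Rabs_pos z).
      assert (z / s z < 1).
      { apply (Rmult_lt_reg_r (s z)); [lra |]. unfold Rdiv. rewrite Rmult_assoc, Rinv_l by lra. lra. }
      replace (0 - (-1 + z / s z) / (2 * n - 1)) with ((1 - z / s z) / (2 * n - 1)) by (field; lra).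
      apply Rdiv_lt_0_compat; lra. }
  assert (Hincr : forall t, y + 1 <= t -> rho (y + 1) <= rho t).
  { intros t Ht. apply (le_of_is_derive_nonneg rho (fun t => t * rho t - 1 + (n - 1 / 2) * rho t ^ 2));
      [intros; apply rho_deriv | | exact Ht].
    intros x Hx. specialize (Habove x ltac:(lra)). specialize (Hgs x). pose proof (Hs x).
    pose proof (Rabs_pos x). specialize (Hg x).
    replace (x * rho x - 1 + (n - 1 / 2) * rho x ^ 2)
      with ((rho x - g x) * (s x + (n - 1 / 2) * (rho x - g x))) by nra.
    apply Rmult_le_pos; nra. }
  pose proof (rho_pos (y + 1)) as Hr1.
  destruct (eventually_exists _ (Rmax (y + 1) (3 / rho (y + 1))) (mul_ratio_near_one 1 ltac:(lra)))
    as [t [Ht Hnear]].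
  pose proof (Rmax_l (y + 1) (3 / rho (y + 1))). pose proof (Rmax_r (y + 1) (3 / rho (y + 1))).
  specialize (Hincr t ltac:(lra)).
  assert (3 <= t * rho (y + 1)).
  { apply (Rmult_le_reg_r (/ rho (y + 1))); [apply Rinv_0_lt_compat; lra |].
    rewrite Rmult_assoc, Rinv_r by lra. unfold Rdiv in *. lra. }
  nra.
Qed.

(* Once [rho <= g] it stays below [g], and [y g(y) < (2n-3)/(2n-1) < 1]. *)
Lemma riccati_ratio_gt_lower_root y : 3 / 2 < n ->
  riccati_root (2 * n - 1) (4 * n - 6) y < rho y.
Proof.
  intros Hn.
  set (g := riccati_root (2 * n - 1) (4 * n - 6)).
  set (s := fun t => sqrt (4 * n - 6 + t ^ 2)).
  set (kap := (4 * n - 6) / (2 * (2 * n - 1))).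
  assert (Hkap : kap < 1) by (unfold kap; apply (Rmult_lt_reg_r (2 * (2 * n - 1))); [lra | field_simplify; lra]).
  assert (Hs : forall t, Rabs t < s t) by (intros t; apply abs_lt_sqrt_add_sq; lra).
  assert (Hg : forall t, (n - 1 / 2) * g t ^ 2 + t * g t = kap).
  { intros t. pose proof (riccati_root_eq (2 * n - 1) (4 * n - 6) ltac:(lra) ltac:(lra) t) as Heq.
    fold g kap in Heq. lra. }
  apply Rnot_le_lt. intros Hle.
  assert (Hbelow : forall t, y < t -> 0 < g t - rho t).
  { apply (pos_of_upcrossings _ (fun t => (-1 + t / s t) / (2 * n - 1)
                                         - (t * rho t - 1 + (n - 1 / 2) * rho t ^ 2)) y).
    - intros t _. apply is_derive_Rminus; [apply is_derive_riccati_root; lra | apply rho_deriv].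
    - lra.
    - intros z _ Hz. cbv beta in Hz |- *. replace (rho z) with (g z) by lra.
      pose proof (Hs z). pose proof (Rabs_maj2 z). pose proof (Rabs_pos z). specialize (Hg z).
      assert (-1 < z / s z).
      { apply (Rmult_lt_reg_r (s z)); [lra |]. unfold Rdiv. rewrite Rmult_assoc, Rinv_l by lra. lra. }
      replace (z * g z - 1 + (n - 1 / 2) * g z ^ 2) with (- 2 / (2 * n - 1))
        by (enough (kap - 1 = - 2 / (2 * n - 1)) by lra; unfold kap; field; lra).
      replace ((-1 + z / s z) / (2 * n - 1) - - 2 / (2 * n - 1)) with ((1 + z / s z) / (2 * n - 1))
        by (field; lra).
      apply Rdiv_lt_0_compat; lra. }
  destruct (eventually_exists _ (Rmax y 0 + 1) (mul_ratio_near_one (1 - kap) ltac:(lra)))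
    as [t [Ht Hnear]].
  pose proof (Rmax_l y 0). pose proof (Rmax_r y 0).
  specialize (Hbelow t ltac:(lra)). specialize (Hg t).
  pose proof (riccati_root_pos (2 * n - 1) (4 * n - 6) ltac:(lra) ltac:(lra) t) as Hgpos.
  fold g in Hgpos.
  assert (t * rho t < t * g t) by (apply Rmult_lt_compat_l; lra).
  assert (0 < (n - 1 / 2) * g t ^ 2) by (apply Rmult_lt_0_compat; [lra | apply pow_lt; lra]).
  lra.
Qed.

End RiccatiRatio.

Section PCFRatio.
Variables (n : R) (u du v dv : R -> R).
Hypothesis n_gt : 1 / 2 < n.
Hypothesis u_deriv : forall y, is_derive u y (du y).
Hypothesis du_deriv : forall y, is_derive du y ((y ^ 2 / 4 + n) * u y).
Hypothesis u_lim : is_lim (fun y => pcf_scale n y * u y) p_infty 1.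
Hypothesis v_deriv : forall y, is_derive v y (dv y).
Hypothesis dv_deriv : forall y, is_derive dv y ((y ^ 2 / 4 + (n - 1)) * v y).
Hypothesis v_lim : is_lim (fun y => pcf_scale (n - 1) y * v y) p_infty 1.

Let u_pos_decr := recessive_pos_decr n u du u_deriv du_deriv u_lim.
Let rec_u := recurrence_u n u du v dv u_deriv du_deriv u_lim v_deriv dv_deriv v_lim.
Let rec_v := recurrence_v n u du v dv u_deriv du_deriv u_lim v_deriv dv_deriv v_lim.

(* [v = y u / 2 - u'] is positive for [y >= 0]; for [y < 0] its zeros would be down-crossings,
   since there [v' = (1/2 - n) u < 0]. *)
Lemma pcf_pred_pos y : 0 < v y.
Proof.
  assert (Hu : forall y, 0 < u y /\ du y < 0) by (apply u_pos_decr; lra).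
  assert (Hv0 : forall y, 0 <= y -> 0 < v y).
  { intros t Ht. destruct (Hu t). pose proof (rec_u t). nra. }
  destruct (Rle_or_lt 0 y) as [Hy | Hy]; [now apply Hv0 |].
  apply (pos_of_downcrossings v dv 0); [intros; apply v_deriv | left; apply Hv0; lra | | exact Hy].
  intros z _ Hz. rewrite rec_v, Hz. destruct (Hu z). nra.
Qed.

Lemma is_derive_pcf_ratio y :
  is_derive (fun t => u t / v t) y (y * (u y / v y) - 1 + (n - 1 / 2) * (u y / v y) ^ 2).
Proof.
  pose proof (pcf_pred_pos y).
  eapply is_derive_eq; [exact (is_derive_div u v y _ _ (u_deriv y) (v_deriv y) ltac:(lra)) |].
  rewrite rec_u, rec_v. field. lra.
Qed.

Lemma lim_mul_pcf_ratio : is_lim (fun y => y * (u y / v y)) p_infty 1.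
Proof.
  apply (is_lim_ext_loc (fun y => pcf_scale n y * u y / (pcf_scale (n - 1) y * v y))).
  - exists 0. intros y Hy. pose proof (pcf_pred_pos y). pose proof (pcf_scale_pos (n - 1) y).
    rewrite (pcf_scale_pred n y Hy). field. split; lra.
  - replace (Finite 1) with (Rbar_div 1 1) by (simpl; f_equal; field).
    apply is_lim_div; [exact u_lim | exact v_lim | | exact I].
    intros H. injection H. lra.
Qed.

Lemma pcf_ratio_lt_upper_root y : u y / v y < riccati_root (2 * n - 1) (4 * n - 2) y.
Proof.
  apply (riccati_ratio_lt_upper_root n (fun t => u t / v t) n_gt is_derive_pcf_ratio lim_mul_pcf_ratio).
  intros t. destruct (u_pos_decr ltac:(lra) t). apply Rdiv_lt_0_compat; [lra | apply pcf_pred_pos].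
Qed.

Lemma pcf_ratio_gt_lower_root y : 3 / 2 < n -> riccati_root (2 * n - 1) (4 * n - 6) y < u y / v y.
Proof.
  exact (riccati_ratio_gt_lower_root n (fun t => u t / v t) n_gt is_derive_pcf_ratio lim_mul_pcf_ratio y).
Qed.

End PCFRatio.

Theorem theorem10 (U : R -> R -> R)
  (HU : forall a : R, is_PCF_U a (U a)) :
  (forall n x : R, 3 / 2 < n -> 0 <= x ->
     (x + sqrt (4 * n - 6 + x ^ 2)) / (2 * n - 1) < U n (- x) / U (n - 1) (- x) /\
     U n (- x) / U (n - 1) (- x) < (x + sqrt (4 * n - 2 + x ^ 2)) / (2 * n - 1)) /\
  (forall n x : R, 1 / 2 < n < 3 / 2 -> 0 <= x ->
     U n (- x) / U (n - 1) (- x) < (x + sqrt (4 * n - 2 + x ^ 2)) / (2 * n - 1)).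
Proof.
  assert (Hbounds : forall n y, 1 / 2 < n ->
    U n y / U (n - 1) y < riccati_root (2 * n - 1) (4 * n - 2) y /\
    (3 / 2 < n -> riccati_root (2 * n - 1) (4 * n - 6) y < U n y / U (n - 1) y)).
  { intros n y Hn.
    destruct (HU n) as [[du Hu] Hul]. destruct (HU (n - 1)) as [[dv Hv] Hvl].
    split; [apply pcf_ratio_lt_upper_root with du dv | intros; apply pcf_ratio_gt_lower_root with du dv];
      auto; intros t; first [apply Hu | apply Hv]. }
  assert (Hroot : forall m c x, riccati_root m c (- x) = (x + sqrt (c + x ^ 2)) / m).
  { intros m c x. unfold riccati_root. now replace ((- x) ^ 2) with (x ^ 2) by ring; rewrite Ropp_involutive. }
  split.
  - intros n x Hn _. rewrite <- !Hroot. destruct (Hbounds n (- x) ltac:(lra)) as [Hup Hlow].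
    split; [apply Hlow, Hn | exact Hup].
  - intros n x Hn _. rewrite <- Hroot. apply Hbounds. lra.
Qed.
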